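(* Let $\mathfrak g$ be a nonsemisimple complex Lie algebra, $\mathfrak p$ a nonperfect ideal of $\mathfrak g$, and $\phi:\mathfrak p\to\mathbb C$ a Lie algebra homomorphism. Then every nonzero $\mathfrak p$-invariant subspace $M$ of $W(\phi)$ contains a nonzero vector $v$ with $pv=\phi(p)v$ for all $p\in\mathfrak p$.
   Context: A Lie algebra homomorphism $\phi:\mathfrak p\to\mathbb C$ is a linear map vanishing on $[\mathfrak p,\mathfrak p]$. Let $\mathbb C w_\phi$ be the one-dimensional $\mathfrak p$-module with $pw_\phi=\phi(p)w_\phi$, and $W(\phi)=\mathcal U(\mathfrak g)\otimes_{\mathcal U(\mathfrak p)}\mathbb C w_\phi$. *)

From mathcomp Require Import all_boot all_order all_algebra.
From mathcomp Require Import reals complex.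

Set Implicit Arguments.
Unset Strict Implicit.
Unset Printing Implicit Defensive.

Import Order.TTheory GRing.Theory Num.Theory.
Local Open Scope ring_scope.

(* A finite-dimensional Lie algebra over a field F is modelled on F^n = 'rV[F]_n
   (with standard basis e_i = delta_mx 0 i) together with a bracket [br]. *)
Section LieDefs.
Variables (F : fieldType) (n : nat).
Local Notation V := 'rV[F]_n.

Definition is_subspace (S : V -> Prop) : Prop :=
  [/\ S 0, (forall x y, S x -> S y -> S (x + y)) & (forall (a : F) x, S x -> S (a *: x))].

Definition is_lie_bracket (br : V -> V -> V) : Prop :=
  [/\ (forall (a : F) x y z, br (a *: x + y) z = a *: br x z + br y z),
      (forall (a : F) x y z, br z (a *: x + y) = a *: br z x + br z y),
      (forall x, br x x = 0) &
      (forall x y z, br x (br y z) + br y (br z x) + br z (br x y) = 0)].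

Inductive derived (br : V -> V -> V) (S : V -> Prop) : V -> Prop :=
| derived_br x y : S x -> S y -> derived br S (br x y)
| derived_0 : derived br S 0
| derived_add x y : derived br S x -> derived br S y -> derived br S (x + y)
| derived_scale (a : F) x : derived br S x -> derived br S (a *: x).

Fixpoint dseries (br : V -> V -> V) (k : nat) (S : V -> Prop) : V -> Prop :=
  match k with 0 => S | k'.+1 => derived br (dseries br k' S) end.

Definition is_ideal (br : V -> V -> V) (I : V -> Prop) : Prop :=
  is_subspace I /\ (forall x y, I y -> I (br x y)).

Definition is_solvable (br : V -> V -> V) (I : V -> Prop) : Prop :=
  exists k, forall x, dseries br k I x -> x = 0.

Definition is_semisimple (br : V -> V -> V) : Prop :=
  forall I, is_ideal br I -> is_solvable br I -> forall x, I x -> x = 0.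

Definition is_perfect (br : V -> V -> V) (P : V -> Prop) : Prop :=
  forall x, P x -> derived br P x.

(* a Lie algebra homomorphism p -> F: linear on p, vanishing on [p, p]
   (only the values of phi on p matter) *)
Definition is_lie_char (br : V -> V -> V) (P : V -> Prop) (phi : V -> F) : Prop :=
  (forall (a : F) x y, P x -> P y -> phi (a *: x + y) = a * phi x + phi y) /\
  (forall x y, P x -> P y -> phi (br x y) = 0).

(* Tensor algebra T(g): noncommutative polynomials in the basis letters,
   represented as finitely supported functions from words to F. *)
Definition word := seq 'I_n.
Definition ser := word -> F.

Definition is_poly (f : ser) : Prop :=
  exists s : seq word, forall w, w \notin s -> f w = 0.

Definition tzero : ser := fun _ => 0.
Definition tone : ser := fun w => (w == [::])%:R.
Definition letter (i : 'I_n) : ser := fun w => (w == [:: i])%:R.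
Definition tadd (f g : ser) : ser := fun w => f w + g w.
Definition tscale (a : F) (f : ser) : ser := fun w => a * f w.
Definition tsub (f g : ser) : ser := fun w => f w - g w.
Definition tmul (f g : ser) : ser :=
  fun w => \sum_(k < (size w).+1) f (take k w) * g (drop k w).
Definition emb (x : V) : ser := fun w => \sum_(i < n) x 0 i * letter i w.

Definition basis_vec (i : 'I_n) : V := delta_mx 0 i.

(* two-sided ideal of T(g) generated by x y - y x - [x, y]; T(g)/Uideal = U(g) *)
Inductive Uideal (br : V -> V -> V) : ser -> Prop :=
| U_gen i j : Uideal br (tsub (tsub (tmul (letter i) (letter j)) (tmul (letter j) (letter i)))
                              (emb (br (basis_vec i) (basis_vec j))))
| U_0 : Uideal br tzero
| U_add f g : Uideal br f -> Uideal br g -> Uideal br (tadd f g)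
| U_scale (a : F) f : Uideal br f -> Uideal br (tscale a f)
| U_lmul i f : Uideal br f -> Uideal br (tmul (letter i) f)
| U_rmul i f : Uideal br f -> Uideal br (tmul f (letter i)).

(* kernel of T(g) -> W(phi) = U(g) (x)_{U(p)} C w_phi, i.e. the preimage in T(g)
   of the left ideal U(g){ p - phi(p) : p in p } *)
Inductive Wker (br : V -> V -> V) (P : V -> Prop) (phi : V -> F) : ser -> Prop :=
| W_U f : Uideal br f -> Wker br P phi f
| W_gen p : P p -> Wker br P phi (tsub (emb p) (tscale (phi p) tone))
| W_add f g : Wker br P phi f -> Wker br P phi g -> Wker br P phi (tadd f g)
| W_scale (a : F) f : Wker br P phi f -> Wker br P phi (tscale a f)
| W_lmul i f : Wker br P phi f -> Wker br P phi (tmul (letter i) f).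

(* subspaces of W(phi) correspond to subspaces M of T(g) containing Wker *)
Definition is_tsubspace (M : ser -> Prop) : Prop :=
  [/\ (forall f, M f -> is_poly f), M tzero,
      (forall f g, M f -> M g -> M (tadd f g)) &
      (forall (a : F) f, M f -> M (tscale a f))].

End LieDefs.

(* Since p is an ideal, [p, x] lies in p for every x in g, and in U(g)
     (p - phi p) x u = x (p - phi p) u + ([p, x] - phi [p, x]) u + phi [p, x] u.
   By induction on the length of u, every operator p - phi(p) therefore maps the
   vectors of W(phi) of degree < m + 1 to vectors of degree < m.  Starting from a
   nonzero vector of M, apply operators p - phi(p) as long as one of them gives a
   nonzero result: the degree drops at each step, so the process stops at a
   nonzero vector of M killed by every p - phi(p). *)

From mathcomp Require Import all_boot all_order all_algebra.
From mathcomp Require Import reals complex ring.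
From Stdlib Require Import FunctionalExtensionality Classical.

Set Implicit Arguments.
Unset Strict Implicit.
Unset Printing Implicit Defensive.
Import GRing.Theory.
Local Open Scope ring_scope.

Lemma descent_along_filtration (T A : Type) (K M : T -> Prop) (dom : A -> Prop)
    (lvl : nat -> T -> Prop) (D : A -> T -> T) :
  (forall f, lvl 0 f -> K f) ->
  (forall m p f, dom p -> lvl m.+1 f -> lvl m (D p f)) ->
  (forall p f, dom p -> M f -> M (D p f)) ->
  forall m f, lvl m f -> M f -> ~ K f ->
  exists v, [/\ M v, ~ K v & forall p, dom p -> K (D p v)].
Proof.
move=> lvl0K D_lvl D_M; elim=> [|m IH] f lvl_f Mf nKf; first by case: nKf; exact: lvl0K.
have [[p [dom_p nK_Dpf]] | all_K] := classic (exists p, dom p /\ ~ K (D p f)).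
  by apply: (IH (D p f)); [exact: D_lvl | exact: D_M |].
by exists f; split=> // p dom_p; apply: NNPP => nK; apply: all_K; exists p.
Qed.

Section TensorAlgebra.
Variables (F : fieldType) (n : nat).
Local Notation ser := (ser F n).
Local Notation letter := (letter F).
Local Notation tone := (tone F (n:=n)).
Local Notation tzero := (@tzero F n).

Lemma ser_eq (f g : ser) : (forall w, f w = g w) -> f = g.
Proof. exact: functional_extensionality. Qed.

Definition lquot (a : ser) (x : 'I_n) : ser := fun w => a (x :: w).

Lemma tmul_nil (a b : ser) : tmul a b [::] = a [::] * b [::].
Proof. by rewrite /tmul big_ord_recl big_ord0 addr0. Qed.

Lemma tmul_cons (a b : ser) x w :
  tmul a b (x :: w) = a [::] * b (x :: w) + tmul (lquot a x) b w.
Proof. by rewrite /tmul /= big_ord_recl. Qed.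

Lemma eq_tmull (a a' b : ser) w : (forall v, a v = a' v) -> tmul a b w = tmul a' b w.
Proof. by move=> eq_a; apply: eq_bigr => k _; rewrite eq_a. Qed.

Lemma tmulDl (a b c : ser) w : tmul (tadd a b) c w = tmul a c w + tmul b c w.
Proof. by rewrite /tmul -big_split; apply: eq_bigr => k _; rewrite /tadd mulrDl. Qed.

Lemma tmulDr (a b c : ser) w : tmul a (tadd b c) w = tmul a b w + tmul a c w.
Proof. by rewrite /tmul -big_split; apply: eq_bigr => k _; rewrite /tadd mulrDr. Qed.

Lemma tmulZl (a : F) (b c : ser) w : tmul (tscale a b) c w = a * tmul b c w.
Proof. by rewrite /tmul mulr_sumr; apply: eq_bigr => k _; rewrite /tscale mulrA. Qed.

Lemma tmulZr (a : F) (b c : ser) w : tmul b (tscale a c) w = a * tmul b c w.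
Proof. by rewrite /tmul mulr_sumr; apply: eq_bigr => k _; rewrite /tscale mulrCA. Qed.

Lemma tmulBl (a b c : ser) w : tmul (tsub a b) c w = tmul a c w - tmul b c w.
Proof. by rewrite /tmul -sumrB; apply: eq_bigr => k _; rewrite /tsub mulrBl. Qed.

Lemma tmulBr (a b c : ser) w : tmul a (tsub b c) w = tmul a b w - tmul a c w.
Proof. by rewrite /tmul -sumrB; apply: eq_bigr => k _; rewrite /tsub mulrBr. Qed.

Lemma tmul0r (c : ser) w : tmul tzero c w = 0.
Proof. by rewrite /tmul big1 // => k _; rewrite /tzero mul0r. Qed.

Lemma tmulr0 (c : ser) w : tmul c tzero w = 0.
Proof. by rewrite /tmul big1 // => k _; rewrite /tzero mulr0. Qed.

Lemma tmul_suml (c : 'I_n -> F) (G : 'I_n -> ser) (b : ser) w :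
  tmul (fun v => \sum_(j < n) c j * G j v) b w = \sum_(j < n) c j * tmul (G j) b w.
Proof.
rewrite /tmul; under eq_bigr do rewrite mulr_suml.
rewrite exchange_big /=; apply: eq_bigr => j _; rewrite mulr_sumr.
by apply: eq_bigr => k _; rewrite mulrA.
Qed.

Lemma tmul_sumr (c : 'I_n -> F) (G : 'I_n -> ser) (b : ser) w :
  tmul b (fun v => \sum_(j < n) c j * G j v) w = \sum_(j < n) c j * tmul b (G j) w.
Proof.
rewrite /tmul; under eq_bigr do rewrite mulr_sumr.
rewrite exchange_big /=; apply: eq_bigr => j _; rewrite mulr_sumr.
by apply: eq_bigr => k _; rewrite mulrCA.
Qed.

Lemma tmul_embl (q : 'rV[F]_n) f w :
  tmul (emb q) f w = \sum_(j < n) q 0 j * tmul (letter j) f w.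
Proof. exact: tmul_suml. Qed.

Lemma tmul_embr (q : 'rV[F]_n) f w :
  tmul f (emb q) w = \sum_(j < n) q 0 j * tmul f (letter j) w.
Proof. exact: tmul_sumr. Qed.

Lemma tmulA (a b c : ser) w : tmul (tmul a b) c w = tmul a (tmul b c) w.
Proof.
elim: w a b => [|x w IH] a b; first by rewrite !tmul_nil mulrA.
rewrite !tmul_cons tmul_nil.
rewrite (@eq_tmull _ (tadd (tscale (a [::]) (lquot b x)) (tmul (lquot a x) b))); last first.
  by move=> v; rewrite /lquot tmul_cons.
by rewrite tmulDl tmulZl IH mulrDr !addrA mulrA.
Qed.

Lemma tmul1r (b : ser) w : tmul tone b w = b w.
Proof.
case: w => [|x w]; first by rewrite tmul_nil /tone /= mul1r.
by rewrite tmul_cons /tone /= mul1r (@eq_tmull _ tzero) ?tmul0r ?addr0.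
Qed.

Lemma tmulr1 (a : ser) w : tmul a tone w = a w.
Proof.
elim: w a => [|x w IH] a; first by rewrite tmul_nil /tone /= mulr1.
by rewrite tmul_cons /tone /= mulr0 add0r IH.
Qed.

Lemma tmul_letter i (f : ser) w :
  tmul (letter i) f w = if w is j :: w' then (j == i)%:R * f w' else 0.
Proof.
case: w => [|j w]; first by rewrite tmul_nil /letter /= mul0r.
rewrite tmul_cons /letter /= mul0r add0r.
rewrite (@eq_tmull _ (tscale (j == i)%:R tone)) ?tmulZl ?tmul1r //.
by move=> v; rewrite /lquot /tscale /tone eqseq_cons andbC;
  case: (v == [::]); case: (j == i); rewrite /= ?mulr1 ?mulr0.
Qed.

Definition tlin_closed (Q : ser -> Prop) : Prop :=
  [/\ Q tzero, (forall f g, Q f -> Q g -> Q (tadd f g)) &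
      (forall a f, Q f -> Q (tscale a f))].

Lemma tlin_closed_sub Q f g : tlin_closed Q -> Q f -> Q g -> Q (tsub f g).
Proof.
case=> _ QD QZ Qf Qg; have -> : tsub f g = tadd f (tscale (-1) g).
  by apply: ser_eq => w; rewrite /tsub /tadd /tscale mulN1r.
by apply: QD => //; apply: QZ.
Qed.

Lemma tlin_closed_sum Q (s : seq 'I_n) (c : 'I_n -> F) (G : 'I_n -> ser) :
  tlin_closed Q -> (forall j, Q (G j)) -> Q (fun w => \sum_(j <- s) c j * G j w).
Proof.
case=> Q0 QD QZ QG; elim: s => [|j s IH].
  by rewrite (_ : (fun w => _) = tzero) //; apply: ser_eq => w; rewrite big_nil.
rewrite (_ : (fun w => _) = tadd (tscale (c j) (G j)) (fun w => \sum_(k <- s) c k * G k w)).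
  by apply: QD; [apply: QZ |].
by apply: ser_eq => w; rewrite big_cons.
Qed.

Lemma tsubspace_tlin_closed M : is_tsubspace M -> tlin_closed M.
Proof. by case. Qed.

Inductive deg_lt : nat -> ser -> Prop :=
| deg_lt_one m : deg_lt m.+1 tone
| deg_lt_zero m : deg_lt m tzero
| deg_lt_add m f g : deg_lt m f -> deg_lt m g -> deg_lt m (tadd f g)
| deg_lt_scale m a f : deg_lt m f -> deg_lt m (tscale a f)
| deg_lt_lmul m i f : deg_lt m f -> deg_lt m.+1 (tmul (letter i) f).

Lemma deg_ltS m f : deg_lt m f -> deg_lt m.+1 f.
Proof. by elim=> *; constructor. Qed.

Lemma deg_lt0 f : deg_lt 0 f -> f = tzero.
Proof.
move Em : 0%N => m deg_f; elim: deg_f Em => // [m' g h _ IHg _ IHh | m' a g _ IHg] m0.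
  by rewrite IHg // IHh //; apply: ser_eq => w; rewrite /tadd /tzero addr0.
by rewrite IHg //; apply: ser_eq => w; rewrite /tscale /tzero mulr0.
Qed.

Definition word_ser (v : word n) : ser := foldr (fun i f => tmul (letter i) f) tone v.

Lemma word_serE v w : word_ser v w = (w == v)%:R.
Proof.
elim: v w => [|i v IH] [|j w] //=; rewrite tmul_letter // IH eqseq_cons.
by case: (j == i); case: (w == v); rewrite /= ?mulr1 ?mulr0 ?mul0r.
Qed.

Lemma deg_lt_word_ser v m : (size v < m)%N -> deg_lt m (word_ser v).
Proof.
elim: v m => [|i v IH] [|m] //= lt_v; first exact: deg_lt_one.
by apply: deg_lt_lmul; apply: IH.
Qed.

Lemma deg_lt_supp (s : seq (word n)) (f : ser) m :
  (forall w, w \notin s -> f w = 0) -> (forall w, w \in s -> (size w < m)%N) ->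
  deg_lt m f.
Proof.
elim: s f => [|v s IH] f supp_f size_s.
  by rewrite (_ : f = tzero); [exact: deg_lt_zero | apply: ser_eq => w; rewrite supp_f].
rewrite (_ : f = tadd (tscale (f v) (word_ser v)) (fun w => if w == v then 0 else f w)).
  apply: deg_lt_add.
    by apply/deg_lt_scale/deg_lt_word_ser/size_s; rewrite inE eqxx.
  apply: IH => [w w_s | w w_s]; last by apply: size_s; rewrite inE w_s orbT.
  by case: ifP => // /negbT w_v; apply: supp_f; rewrite inE negb_or w_v.
apply: ser_eq => w; rewrite /tadd /tscale word_serE.
by case: eqP => [->|_]; rewrite ?mulr1 ?addr0 ?mulr0 ?add0r.
Qed.

Lemma poly_deg_lt f : is_poly f -> exists m, deg_lt m f.
Proof.
case=> s supp_f; exists (\max_(w <- s) size w).+1.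
by apply: (deg_lt_supp supp_f) => w w_s; rewrite ltnS; exact: leq_bigmax_seq.
Qed.

End TensorAlgebra.

Section WhittakerVectors.
Variables (F : fieldType) (n : nat).
Local Notation ser := (ser F n).
Local Notation V := 'rV[F]_n.
Local Notation letter := (letter F).
Local Notation tone := (tone F (n:=n)).
Local Notation tzero := (@tzero F n).
Local Notation e := (basis_vec F).
Variables (br : V -> V -> V) (P : V -> Prop) (phi : V -> F).
Hypothesis br_lie : is_lie_bracket br.
Hypothesis P_ideal : is_ideal br P.
Local Notation K := (Wker br P phi).
Local Notation U := (Uideal br).

Lemma brDl x y z : br (x + y) z = br x z + br y z.
Proof. by case: br_lie => lin_l _ _ _; have := lin_l 1 x y z; rewrite !scale1r. Qed.

Lemma brDr x y z : br z (x + y) = br z x + br z y.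
Proof. by case: br_lie => _ lin_r _ _; have := lin_r 1 x y z; rewrite !scale1r. Qed.

Lemma br0l z : br 0 z = 0.
Proof. by case: br_lie => lin_l _ _ _; have := lin_l (-1) 0 0 z; rewrite !scaleN1r !addNr. Qed.

Lemma brZl a x z : br (a *: x) z = a *: br x z.
Proof. by case: br_lie => lin_l _ _ _; have := lin_l a x 0 z; rewrite !addr0 br0l addr0. Qed.

Lemma brN x y : br x y = - br y x.
Proof.
case: br_lie => _ _ br_xx _; have := br_xx (x + y).
by rewrite brDl !brDr !br_xx add0r addr0 => /eqP; rewrite addr_eq0 => /eqP.
Qed.

Lemma br_sum q z : br q z = \sum_(j < n) q 0 j *: br (e j) z.
Proof.
rewrite [in LHS](row_sum_delta q).
apply: (big_ind2 (fun x y => br x z = y)); first exact: br0l.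
  by move=> x1 x2 y1 y2 <- <-; rewrite brDl.
by move=> j _; rewrite brZl.
Qed.

Lemma emb_sum (c : 'I_n -> F) (v : 'I_n -> V) w :
  emb (\sum_(j < n) c j *: v j) w = \sum_(j < n) c j * emb (v j) w.
Proof.
rewrite /emb; under eq_bigr do rewrite summxE mulr_suml.
rewrite exchange_big /=; apply: eq_bigr => j _; rewrite mulr_sumr.
by apply: eq_bigr => k _; rewrite mxE mulrA.
Qed.

Lemma P_br q x : P q -> P (br q x).
Proof. by case: P_ideal => -[_ _ PZ] P_br Pq; rewrite brN -scaleN1r; apply/PZ/P_br. Qed.

Lemma Uideal_tlin_closed : tlin_closed U.
Proof. by split; [exact: U_0 | exact: U_add | exact: U_scale]. Qed.

Lemma Wker_tlin_closed : tlin_closed K.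
Proof. by split; [exact: W_U (U_0 _) | exact: W_add | exact: W_scale]. Qed.

Lemma Wker_lmul_emb q f : K f -> K (tmul (emb q) f).
Proof.
move=> Kf; rewrite (_ : tmul _ f = fun w => \sum_(j < n) q 0 j * tmul (letter j) f w).
  by apply: tlin_closed_sum Wker_tlin_closed _ => j; apply: W_lmul.
by apply: ser_eq => w; rewrite tmul_embl.
Qed.

Definition tcomm q i : ser :=
  tsub (tsub (tmul (emb q) (letter i)) (tmul (letter i) (emb q))) (emb (br q (e i))).

Lemma Uideal_tcomm q i : U (tcomm q i).
Proof.
rewrite (_ : tcomm q i = fun w => \sum_(j < n) q 0 j *
   tsub (tsub (tmul (letter j) (letter i)) (tmul (letter i) (letter j)))
     (emb (br (e j) (e i))) w).
  by apply: tlin_closed_sum Uideal_tlin_closed _ => j; apply: U_gen.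
apply: ser_eq => w; rewrite /tcomm /tsub tmul_embl tmul_embr br_sum emb_sum.
by rewrite -!sumrB; apply: eq_bigr => j _; ring.
Qed.

Lemma Uideal_tmulr m u g : U u -> deg_lt m g -> U (tmul u g).
Proof.
move=> Uu deg_g; elim: deg_g u Uu => {m g} [m | m | m f g _ IHf _ IHg | m a f _ IHf
  | m i f _ IHf] u Uu.
- by rewrite (_ : tmul u tone = u) //; apply: ser_eq => w; exact: tmulr1.
- by rewrite (_ : tmul u tzero = tzero); [exact: U_0 | apply: ser_eq => w; exact: tmulr0].
- rewrite (_ : tmul u _ = tadd (tmul u f) (tmul u g)); first by apply: U_add; auto.
  by apply: ser_eq => w; rewrite tmulDr.
- rewrite (_ : tmul u _ = tscale a (tmul u f)); first by apply/U_scale/IHf.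
  by apply: ser_eq => w; rewrite tmulZr.
- rewrite (_ : tmul u _ = tmul (tmul u (letter i)) f); first by apply/IHf/U_rmul.
  by apply: ser_eq => w; rewrite tmulA.
Qed.

Definition twisted_act q (f : ser) : ser := tsub (tmul (emb q) f) (tscale (phi q) f).

Lemma twisted_actD q f g : twisted_act q (tadd f g) = tadd (twisted_act q f) (twisted_act q g).
Proof. by apply: ser_eq => w; rewrite /twisted_act /tsub tmulDr /tadd /tscale; ring. Qed.

Lemma twisted_actZ q a f : twisted_act q (tscale a f) = tscale a (twisted_act q f).
Proof. by apply: ser_eq => w; rewrite /twisted_act /tsub tmulZr /tscale; ring. Qed.

Lemma twisted_actB q f g : twisted_act q (tsub f g) = tsub (twisted_act q f) (twisted_act q g).
Proof. by apply: ser_eq => w; rewrite /twisted_act /tsub tmulBr /tscale; ring. Qed.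

Lemma twisted_act0 q : twisted_act q tzero = tzero.
Proof. by apply: ser_eq => w; rewrite /twisted_act /tsub tmulr0 /tscale /tzero; ring. Qed.

Lemma twisted_act1 q : twisted_act q tone = tsub (emb q) (tscale (phi q) tone).
Proof. by apply: ser_eq => w; rewrite /twisted_act /tsub tmulr1. Qed.

Lemma twisted_act_lmul q i f : twisted_act q (tmul (letter i) f) =
  tadd (tadd (tadd (tmul (letter i) (twisted_act q f)) (twisted_act (br q (e i)) f))
    (tscale (phi (br q (e i))) f)) (tmul (tcomm q i) f).
Proof.
apply: ser_eq => w.
by rewrite /twisted_act /tcomm /tadd tmulBr tmulZr !tmulBl !tmulA /tsub /tscale; ring.
Qed.

Lemma Wker_twisted_act q f : K f -> K (twisted_act q f).
Proof.
by move=> Kf; apply: tlin_closed_sub Wker_tlin_closed _ _; [apply: Wker_lmul_emb | apply: W_scale].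
Qed.

(* the image of f in W(phi) = T(g) / Wker has degree < m *)
Definition wdeg_lt m (f : ser) : Prop := exists g, deg_lt m g /\ K (tsub f g).

Lemma Wker_wdeg_lt m f : K f -> wdeg_lt m f.
Proof.
move=> Kf; exists tzero; split; first exact: deg_lt_zero.
by rewrite (_ : tsub f tzero = f) //; apply: ser_eq => w; rewrite /tsub /tzero subr0.
Qed.

Lemma deg_lt_wdeg_lt m f : deg_lt m f -> wdeg_lt m f.
Proof.
move=> deg_f; exists f; split=> //.
by rewrite (_ : tsub f f = tzero); [exact: W_U (U_0 _) | apply: ser_eq => w; rewrite /tsub subrr].
Qed.

Lemma wdeg_lt0 f : wdeg_lt 0 f -> K f.
Proof.
case=> g [/deg_lt0 -> Kf].
by rewrite (_ : f = tsub f tzero) //; apply: ser_eq => w; rewrite /tsub /tzero subr0.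
Qed.

Lemma wdeg_ltS m f : wdeg_lt m f -> wdeg_lt m.+1 f.
Proof. by case=> g [deg_g Kfg]; exists g; split=> //; apply: deg_ltS. Qed.

Lemma wdeg_ltD m f g : wdeg_lt m f -> wdeg_lt m g -> wdeg_lt m (tadd f g).
Proof.
move=> [f' [deg_f' Kff']] [g' [deg_g' Kgg']]; exists (tadd f' g').
split; first exact: deg_lt_add.
rewrite (_ : tsub _ _ = tadd (tsub f f') (tsub g g')); first exact: W_add.
by apply: ser_eq => w; rewrite /tsub /tadd; ring.
Qed.

Lemma wdeg_ltZ m a f : wdeg_lt m f -> wdeg_lt m (tscale a f).
Proof.
move=> [f' [deg_f' Kff']]; exists (tscale a f'); split; first exact: deg_lt_scale.
rewrite (_ : tsub _ _ = tscale a (tsub f f')); first exact: W_scale.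
by apply: ser_eq => w; rewrite /tsub /tscale; ring.
Qed.

Lemma wdeg_lt_lmul m i f : wdeg_lt m f -> wdeg_lt m.+1 (tmul (letter i) f).
Proof.
move=> [f' [deg_f' Kff']]; exists (tmul (letter i) f'); split; first exact: deg_lt_lmul.
rewrite (_ : tsub _ _ = tmul (letter i) (tsub f f')); first exact: W_lmul.
by apply: ser_eq => w; rewrite tmulBr.
Qed.

Lemma deg_lt_twisted_act m g q : deg_lt m g -> P q -> wdeg_lt m.-1 (twisted_act q g).
Proof.
move=> deg_g; elim: deg_g q => {m g} [m | m | m f g _ IHf _ IHg | m a f _ IHf
  | m i f deg_f IHf] q Pq.
- by rewrite twisted_act1; apply/Wker_wdeg_lt/W_gen.
- by rewrite twisted_act0; apply/Wker_wdeg_lt/W_U/U_0.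
- by rewrite twisted_actD; apply: wdeg_ltD; auto.
- by rewrite twisted_actZ; apply/wdeg_ltZ/IHf.
rewrite twisted_act_lmul /=.
apply: wdeg_ltD; last exact/Wker_wdeg_lt/W_U/(Uideal_tmulr (Uideal_tcomm q i) deg_f).
apply: wdeg_ltD; last exact/wdeg_ltZ/deg_lt_wdeg_lt.
apply: wdeg_ltD.
  case: m deg_f IHf => [|m] _ IHf; last exact/wdeg_lt_lmul/IHf.
  exact/Wker_wdeg_lt/W_lmul/wdeg_lt0/IHf.
case: m deg_f IHf => [|m] _ IHf; first exact: IHf (P_br _ Pq).
exact/wdeg_ltS/IHf/P_br.
Qed.

Lemma wdeg_lt_twisted_act m f q : wdeg_lt m.+1 f -> P q -> wdeg_lt m (twisted_act q f).
Proof.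
move=> [g [deg_g Kfg]] Pq.
rewrite (_ : twisted_act q f = tadd (twisted_act q g) (twisted_act q (tsub f g))).
  exact/wdeg_ltD/Wker_wdeg_lt/Wker_twisted_act/Kfg/(deg_lt_twisted_act deg_g).
by rewrite twisted_actB; apply: ser_eq => w; rewrite /tadd /tsub; ring.
Qed.

Lemma whittaker_vector_exists (M : ser -> Prop) :
  is_tsubspace M -> (forall q f, P q -> M f -> M (tmul (emb q) f)) ->
  (exists f, M f /\ ~ K f) ->
  exists v, [/\ M v, ~ K v & forall q, P q -> K (twisted_act q v)].
Proof.
move=> M_sub M_emb [f [Mf nKf]]; have M_lin := tsubspace_tlin_closed M_sub.
have [m deg_f] : exists m, deg_lt m f by case: M_sub => M_poly _ _ _; exact/poly_deg_lt/M_poly.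
apply: (descent_along_filtration wdeg_lt0 _ _ (deg_lt_wdeg_lt deg_f) Mf nKf).
  by move=> k q g Pq /wdeg_lt_twisted_act; apply.
move=> q g Pq Mg; have [_ _ M_scale] := M_lin.
by apply: (tlin_closed_sub M_lin); [exact: M_emb | exact: M_scale].
Qed.

End WhittakerVectors.

Unset Implicit Arguments.

Theorem proposition3p2 (R : realType) (n : nat)
  (br : 'rV[R[i]]_n -> 'rV[R[i]]_n -> 'rV[R[i]]_n)
  (P : 'rV[R[i]]_n -> Prop) (phi : 'rV[R[i]]_n -> R[i]) :
  is_lie_bracket br ->
  ~ is_semisimple br ->
  is_ideal br P ->
  ~ is_perfect br P ->
  is_lie_char br P phi ->
  forall M : ser R[i] n -> Prop,
    is_tsubspace M ->
    (forall f, Wker br P phi f -> M f) ->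
    (forall p f, P p -> M f -> M (tmul (emb p) f)) ->
    (exists f, M f /\ ~ Wker br P phi f) ->
    exists v, [/\ M v, ~ Wker br P phi v &
      forall p, P p -> Wker br P phi (tsub (tmul (emb p) v) (tscale (phi p) v))].
Proof.
move=> br_lie _ P_ideal _ _ M M_sub _ M_emb M_nontrivial.
exact: whittaker_vector_exists.
Qed.
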